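(* Let $\gamma\in(0,+\infty)\setminus\mathbb N$, $f\in C^\infty(\mathbb S^n)$ and $m\in\mathbb N$. Then $B^{2\gamma}_{2j}(\rho^{2j}f)=f$ and $B^{2\gamma}_{2j}(\rho^{2j+2m}f)=0$ for $0\le j\le\lfloor\gamma/2\rfloor$, and $B^{2\gamma}_{2j+2[\gamma]}(\rho^{2j+2[\gamma]}f)=f$ and $B^{2\gamma}_{2j+2[\gamma]}(\rho^{2j+2[\gamma]+2m}f)=0$ for $0\le j\le\lfloor\gamma\rfloor-\lfloor\gamma/2\rfloor-1$.
   Context: $n\ge1$, $\mathbb B^{n+1}$ the unit ball in $\mathbb R^{n+1}$, $x=r\theta$, functions on $\mathbb S^n$ extended by $f(r\theta)=f(\theta)$; $\mathbb N=\{1,2,\dots\}$. $g_{\mathbb B}=\frac{4|dx|^2}{(1-|x|^2)^2}$, $\Delta_+$ its Laplace–Beltrami operator, $\rho=\frac{2(1-r)}{1+r}$. $\lfloor\gamma\rfloor$ integer part, $[\gamma]=\gamma-\lfloor\gamma\rfloor$, $s=\frac n2+\gamma$, $D_t=-\Delta_+-t(n-t)$. Boundary operators (small indices): $B^{2\gamma}_0(U)=U|_{\rho=0}$; for $1\le j\le\lfloor\gamma/2\rfloor$, $B^{2\gamma}_{2j}(U)=\frac1{b_{2j}}\rho^{-\frac n2+\gamma-2j}\prod_{l=0}^{j-1}D_{s-2l}\prod_{l=\lfloor\gamma\rfloor-j+1}^{\lfloor\gamma\rfloor}D_{s-2l}(\rho^{\frac n2-\gamma}U)|_{\rho=0}$;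 for $0\le j\le\lfloor\gamma\rfloor-\lfloor\gamma/2\rfloor-1$, $B^{2\gamma}_{2j+2[\gamma]}(U)=\frac{-1}{b_{2j+2[\gamma]}}\rho^{-\frac n2+\gamma-2j-2[\gamma]}\prod_{l=0}^{j}D_{s-2l}\prod_{l=\lfloor\gamma\rfloor-j+1}^{\lfloor\gamma\rfloor}D_{s-2l}(\rho^{\frac n2-\gamma}U)|_{\rho=0}$, where the nonzero constants $b_{2j},b_{2j+2[\gamma]}$ are chosen so that $B^{2\gamma}_{2j}(\rho^{2j})=1$ and $B^{2\gamma}_{2j+2[\gamma]}(\rho^{2j+2[\gamma]})=1$. *)

From HB Require Import structures.
From mathcomp Require Import all_boot all_order all_algebra.
From mathcomp Require Import all_classical all_reals all_analysis.
Set Implicit Arguments. Unset Strict Implicit. Unset Printing Implicit Defensive.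
Import Order.TTheory GRing.Theory Num.Theory.
Import numFieldNormedType.Exports.
Local Open Scope classical_set_scope.
Local Open Scope ring_scope.

Section Defs.
Variables (R : realType) (n : nat).
Local Notation vec := 'rV[R]_(n.+1).

Definition enorm (x : vec) : R := Num.sqrt (\sum_i x ord0 i ^+ 2).
Definition on_sphere (th : vec) : Prop := enorm th = 1.
Definition ebasis (i : 'I_n.+1) : vec := delta_mx ord0 i.
Definition pd (i : 'I_n.+1) (F : vec -> R) : vec -> R :=
  fun x => derive F x (ebasis i).
Fixpoint dpart (s : seq 'I_n.+1) (F : vec -> R) : vec -> R :=
  match s with [::] => F | i :: s' => pd i (dpart s' F) end.
Definition smooth_on (A : set vec) (F : vec -> R) : Prop :=
  forall (s : seq 'I_n.+1) (i : 'I_n.+1) (x : vec), A x -> derivable (dpart s F) x (ebasis i).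
Definition radial (f : vec -> R) : vec -> R := fun x => f ((enorm x)^-1 *: x).
(* conformal factor phi, g_B = phi^2 |dx|^2, phi = 2/(1-|x|^2) *)
Definition cfac (x : vec) : R := 2 / (1 - enorm x ^+ 2).
(* Laplace-Beltrami operator of g_B: (1/sqrt g) d_i (sqrt g g^{ij} d_j U),
   with sqrt g = phi^{n+1}, g^{ij} = phi^{-2} delta_ij *)
Definition LB (U : vec -> R) : vec -> R :=
  fun x => (cfac x ^+ n.+1)^-1 *
           \sum_i pd i (fun y => cfac y ^+ n.-1 * pd i U y) x.
Definition Dop (t : R) (U : vec -> R) : vec -> R :=
  fun x => - LB U x - t * (n%:R - t) * U x.
Definition Dprod (ts : seq R) (U : vec -> R) : vec -> R := foldr Dop U ts.
Definition rho (x : vec) : R := 2 * (1 - enorm x) / (1 + enorm x).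
Definition flo (g : R) : nat := Num.truncn g.
Definition fracp (g : R) : R := g - (flo g)%:R.
Definition sp (g : R) : R := n%:R / 2 + g.
(* boundary value: V|_{rho=0} at theta equals l (limit r -> 1^-) *)
Definition bdry (V : vec -> R) (th : vec) (l : R) : Prop :=
  (fun r : R => V (r *: th)) @ 1^'- --> l.
(* a fixed point of the sphere, used to read off the constants b *)
Definition th0 : vec := ebasis ord0.

Definition ts_even (g : R) (j : nat) : seq R :=
  [seq sp g - 2 * l%:R | l <- iota 0 j] ++
  [seq sp g - 2 * l%:R | l <- iota (flo g - j + 1) j].
Definition ts_odd (g : R) (j : nat) : seq R :=
  [seq sp g - 2 * l%:R | l <- iota 0 j.+1] ++
  [seq sp g - 2 * l%:R | l <- iota (flo g - j + 1) j].
Definition Beven_un (g : R) (j : nat) (U : vec -> R) : vec -> R :=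
  fun x => rho x `^ (- (n%:R / 2) + g - 2 * j%:R) *
           Dprod (ts_even g j) (fun y => rho y `^ (n%:R / 2 - g) * U y) x.
Definition Bodd_un (g : R) (j : nat) (U : vec -> R) : vec -> R :=
  fun x => rho x `^ (- (n%:R / 2) + g - 2 * j%:R - 2 * fracp g) *
           Dprod (ts_odd g j) (fun y => rho y `^ (n%:R / 2 - g) * U y) x.
(* constants b: chosen so that B_{2j}(rho^{2j}) = 1, B_{2j+2[g]}(rho^{2j+2[g]}) = 1 *)
Definition b_even (g : R) (j : nat) : R :=
  lim ((fun r : R => Beven_un g j (fun y => rho y `^ (2 * j%:R)) (r *: th0)) @ 1^'-).
Definition b_odd (g : R) (j : nat) : R :=
  - lim ((fun r : R => Bodd_un g j (fun y => rho y `^ (2 * j%:R + 2 * fracp g)) (r *: th0)) @ 1^'-).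
(* the operators before taking rho = 0; B(U)(theta) = l  iff  bdry (Bexpr U) theta l *)
Definition Beven (g : R) (j : nat) (U : vec -> R) : vec -> R :=
  if j == 0%N then U else fun x => (b_even g j)^-1 * Beven_un g j U x.
Definition Bodd (g : R) (j : nat) (U : vec -> R) : vec -> R :=
  fun x => - (b_odd g j)^-1 * Bodd_un g j U x.
End Defs.

(* Let phi = 2 / (1 - |x|^2) be the conformal factor of g_B.  On 0 < |x| < 1 the
   defining function rho satisfies sum_i (d_i rho)^2 = (phi rho)^2, i.e. |d rho|_{g_B} = rho,
   and a direct computation of the Laplace-Beltrami operator then gives, for E smooth up to
   the sphere,
       D_t (rho^a E) = rho^a (kappa(a, t) E + rho E'),   kappa(a, t) = -a(a - n) - t(n - t),
   with E' again smooth up to the sphere.  Iterating, a product of D's maps rho^p (L + rho E)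
   to rho^p ((prod kappa(p, t)) L + rho E'), so after multiplication by the complementary
   power of rho the boundary value is (prod kappa(p, t)) L.  For rho^p f this is a multiple
   of f, while the extra factor rho^(2m) makes L = 0.  The normalising constant b is the
   same product with L = 1; each of its factors splits into two linear terms, which vanish
   only if gamma is an integer or for indices excluded by the ranges in the product, so
   b != 0 and the normalised operator returns f itself. *)

From HB Require Import structures.
From mathcomp Require Import all_boot all_order all_algebra.
From mathcomp Require Import all_classical all_reals all_analysis.
From mathcomp Require Import ring lra zify.
Import Order.TTheory GRing.Theory Num.Theory.
Import numFieldNormedType.Exports.
Local Open Scope classical_set_scope.
Local Open Scope ring_scope.
Set Implicit Arguments. Unset Strict Implicit. Unset Printing Implicit Defensive.

Section IndicialRoots.
Variables (R : realType) (n : nat).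

Definition indicial (a t : R) : R := - (a * (a - n%:R)) - t * (n%:R - t).

Lemma indicial_shift (a b : R) : indicial (n%:R / 2 + a) (n%:R / 2 + b) = (b - a) * (b + a).
Proof. by rewrite /indicial; field. Qed.

Lemma flo_half (g : R) : 0 <= g -> (2 * flo (g / 2) <= flo g <= (2 * flo (g / 2)).+1)%N.
Proof.
move=> g_ge0; have /andP[lo hi] := truncn_itv (divr_ge0 g_ge0 (ler0n R 2)).
rewrite /flo truncn_ge_nat // truncn_le_nat natrM; apply/andP; split; first lra.
by rewrite -addn2 -mulnSr natrM; lra.
Qed.

Lemma nonint_neq (g : R) (z : int) : 0 < g -> (forall k : nat, g <> k%:R) -> g != z%:~R.
Proof.
move=> g_gt0 g_nonint; apply/eqP => gz; case: z gz => k gk; first exact: (g_nonint k).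
move: g_gt0; rewrite gk NegzE mulrNz oppr_gt0 ltNge => /negP; apply.
exact: ler0n.
Qed.

Lemma indicial_sp (a g : R) (l : nat) :
  indicial (n%:R / 2 + a) (sp n g - 2 * l%:R) = (g - 2 * l%:R - a) * (g - 2 * l%:R + a).
Proof. by rewrite /sp -addrA indicial_shift. Qed.

Lemma indicial_even_neq0 (g : R) (j : nat) : 0 < g -> (forall k : nat, g <> k%:R) ->
  (j <= flo (g / 2))%N -> \prod_(t <- ts_even n g j) indicial (n%:R / 2 - g + 2 * j%:R) t != 0.
Proof.
move=> g_gt0 g_nonint j_le; have /andP[lo hi] := flo_half (ltW g_gt0).
rewrite (_ : n%:R / 2 - g + 2 * j%:R = n%:R / 2 + (2 * j%:R - g)); last by ring.
have diff_neq0 l : g - 2 * l%:R - (2 * j%:R - g) != 0.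
  rewrite (_ : g - _ - _ = 2 * (g - (l + j)%:R)); last by rewrite natrD; ring.
  by rewrite mulf_neq0 ?pnatr_eq0 // subr_eq0; apply/eqP/g_nonint.
have sum_neq0 l : l != j -> g - 2 * l%:R + (2 * j%:R - g) != 0.
  move=> lj; rewrite (_ : g - _ + _ = 2 * (j%:R - l%:R)); last by ring.
  by rewrite mulf_neq0 ?pnatr_eq0 // subr_eq0 eqr_nat eq_sym.
rewrite prodf_seq_neq0; apply/allP => _ /[!mem_cat] /orP[] /mapP[l /[!mem_iota] l_range ->] /=;
  by rewrite indicial_sp mulf_neq0 ?diff_neq0 ?sum_neq0 //; lia.
Qed.

Lemma indicial_odd_neq0 (g : R) (j : nat) : 0 < g -> (forall k : nat, g <> k%:R) ->
  (j.+1 + flo (g / 2) <= flo g)%N ->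
  \prod_(t <- ts_odd n g j) indicial (n%:R / 2 - g + (2 * j%:R + 2 * fracp g)) t != 0.
Proof.
move=> g_gt0 g_nonint j_lt; have /andP[lo hi] := flo_half (ltW g_gt0).
rewrite (_ : _ + (_ + _) = n%:R / 2 + (2 * j%:R + g - 2 * (flo g)%:R)); last first.
  by rewrite /fracp; ring.
have diff_neq0 l : (l + j != flo g)%N -> g - 2 * l%:R - (2 * j%:R + g - 2 * (flo g)%:R) != 0.
  move=> ljF; rewrite (_ : g - _ - _ = 2 * ((flo g)%:R - (l + j)%:R)); last by rewrite natrD; ring.
  by rewrite mulf_neq0 ?pnatr_eq0 // subr_eq0 eqr_nat eq_sym.
have sum_neq0 l : g - 2 * l%:R + (2 * j%:R + g - 2 * (flo g)%:R) != 0.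
  rewrite (_ : g - _ + _ = 2 * (g - ((flo g + l)%:Z - j%:Z)%:~R)); last first.
    by rewrite mulrzBr -!pmulrn natrD; ring.
  by rewrite mulf_neq0 ?pnatr_eq0 // subr_eq0 nonint_neq.
rewrite prodf_seq_neq0; apply/allP => _ /[!mem_cat] /orP[] /mapP[l /[!mem_iota] l_range ->] /=;
  by rewrite indicial_sp mulf_neq0 ?diff_neq0 ?sum_neq0 //; lia.
Qed.

End IndicialRoots.

Lemma powR_addn (R : realType) (a b : R) (m : nat) : 0 < a -> a `^ (b + m%:R) = a `^ b * a ^+ m.
Proof.
move=> a_gt0; rewrite powRD ?powR_mulrn ?(ltW a_gt0) //.
by rewrite (gt_eqF a_gt0) implybT.
Qed.

Section DirectionalDerivative.
Variables (R : realFieldType) (V : normedModType R).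
Implicit Types (F : V -> R) (x v : V).

Lemma derive_along_line F x v : 'D_v F x = 'D_1 (fun h : R => F (h *: v + x)) 0.
Proof.
rewrite /derive; set g1 := fun h => h^-1 *: _; set g2 := fun h => h^-1 *: _.
suff -> : g1 = g2 by [].
by apply/funext => h; rewrite /g1 /g2 /= addr0 scale0r add0r [_%:A]mulr1.
Qed.

Lemma is_derive_along_line F x v (d : R) :
  is_derive x v F d <-> is_derive (0 : R) 1 (fun h : R => F (h *: v + x)) d.
Proof.
split=> -[dF <-]; split; rewrite ?derive_along_line //.
- by move/derivable1P: dF.
- exact/derivable1P.
Qed.

Lemma is_deriveV F x v (d : R) : F x != 0 -> is_derive x v F d ->
  is_derive x v (fun y => (F y)^-1) (- (F x) ^- 2 * d).
Proof.
move=> Fx0 [dF <-]; split; first exact: derivableV.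
by rewrite deriveV.
Qed.

Lemma is_derive_comp (S : V -> R) (g : R -> R) x v (dS dg : R) :
  is_derive x v S dS -> is_derive (S x) 1 g dg ->
  is_derive x v (fun y => g (S y)) (dg * dS).
Proof.
move=> /is_derive_along_line[dS1 <-] [dg1 <-]; apply/is_derive_along_line.
have S0 : S (0 *: v + x) = S x by rewrite scale0r add0r.
rewrite -S0 in dg1; split.
  apply/derivable1_diffP/(differentiable_comp (f := fun h : R => S (h *: v + x)));
  exact/derivable1_diffP.
by rewrite -derive1E (derive1_comp (f := fun h : R => S (h *: v + x))) // S0 !derive1E -S0.
Qed.

End DirectionalDerivative.

Section DirectionalDerivativeScale.
Variables (R : realFieldType) (V : normedModType R).
Implicit Types (F : V -> R) (x v : V).

Lemma is_derive_compZ F (c : R) (a v : V) (d : R) :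
  is_derive (c *: a) v F d -> is_derive a v (fun z => F (c *: z)) (c * d).
Proof.
move=> /is_derive_along_line dF; apply/is_derive_along_line.
have dc : is_derive (0 : R) 1 (fun h : R => c * h) c.
  have := is_deriveZ c (is_derive_id (0 : R) 1).
  by rewrite [_ *: 1]mulr1.
have -> : (fun h : R => F (c *: (h *: v + a))) = (fun h => F ((c * h) *: v + c *: a)).
  by apply/funext => h; rewrite scalerDr scalerA.
rewrite mulrC; apply: (is_derive_comp (g := fun h => F (h *: v + c *: a)) dc).
by rewrite mulr0.
Qed.

End DirectionalDerivativeScale.

Section EuclideanNorm.
Variables (R : realType) (n : nat).
Local Notation vec := 'rV[R]_n.+1.
Local Notation enorm := (@enorm R n).
Implicit Types (x y v : vec).

Lemma enorm_ge0 x : 0 <= enorm x.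
Proof. exact: sqrtr_ge0. Qed.

Lemma enorm_sq x : enorm x ^+ 2 = \sum_i x ord0 i ^+ 2.
Proof. by rewrite /enorm sqr_sqrtr // sumr_ge0 // => i _; rewrite sqr_ge0. Qed.

Lemma enormZ (c : R) x : enorm (c *: x) = `|c| * enorm x.
Proof.
rewrite /enorm (eq_bigr (fun i => c ^+ 2 * x ord0 i ^+ 2)); last first.
  by move=> i _; rewrite mxE exprMn.
by rewrite -mulr_sumr sqrtrM ?sqr_ge0 // sqrtr_sqr.
Qed.

Lemma enorm_eq0 x : (enorm x == 0) = (x == 0).
Proof.
apply/idP/eqP => [|->]; last first.
  by rewrite /enorm big1 ?sqrtr0 // => i _; rewrite mxE expr0n.
rewrite /enorm sqrtr_eq0 => sum_le0.
have /psumr_eq0P x2_0 : \sum_i x ord0 i ^+ 2 = 0.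
  by apply/eqP; rewrite eq_le sum_le0 sumr_ge0 // => i _; rewrite sqr_ge0.
apply/rowP => j; rewrite mxE; apply/eqP; rewrite -sqrf_eq0; apply/eqP.
by apply: x2_0 => // i _; rewrite sqr_ge0.
Qed.

Lemma enorm_gt0 x : (0 < enorm x) = (x != 0).
Proof. by rewrite lt_def enorm_ge0 enorm_eq0 andbT. Qed.

Lemma enorm_ebasis i : enorm (ebasis R i) = 1.
Proof.
rewrite /enorm (bigD1 i) //= big1 ?addr0; last first.
  by move=> j /negbTE ji; rewrite mxE ji /= expr0n.
by rewrite mxE !eqxx expr1n sqrtr1.
Qed.

Lemma continuous_enorm : continuous enorm.
Proof.
move=> x; apply: continuous_comp; last exact: sqrt_continuous.
apply: (continuous_big (op := +%R) (U := R)) => [|i _ y]; first exact: add_continuous.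
by apply: continuousM; exact: coord_continuous.
Qed.

Lemma is_derive_coord x v (j : 'I_n.+1) : is_derive x v (fun y : vec => y ord0 j) (v ord0 j).
Proof.
have dx : derivable (@id vec) x v by exact: derivable_id.
split; first by move/derivable_mxP : dx; apply.
by move: (derive_mx dx); rewrite derive_id => /matrixP/(_ ord0 j); rewrite mxE.
Qed.

Lemma is_derive_enorm x (i : 'I_n.+1) : x != 0 ->
  is_derive x (ebasis R i) enorm (x ord0 i / enorm x).
Proof.
rewrite -enorm_gt0 => x_gt0.
have sum_gt0 : 0 < \sum_j x ord0 j ^+ 2 by rewrite -enorm_sq exprn_gt0.
have dsum : is_derive x (ebasis R i) (fun y : vec => \sum_j y ord0 j ^+ 2) (2 * x ord0 i).
  have -> : (fun y : vec => \sum_j y ord0 j ^+ 2) = \sum_j (fun y : vec => y ord0 j) ^+ 2.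
    by apply/funext => y; rewrite fct_sumE.
  apply: is_derive_eq.
    exact: is_derive_sum (fun j => is_deriveX 2 (is_derive_coord x (ebasis R i) j)).
  rewrite (bigD1 i) //= big1 ?addr0 => [|j /negbTE ji]; last first.
    by rewrite mxE ji /= [_ *: _]mulr0.
  by rewrite mxE !eqxx /= [_ *: _]mulr1 expr1.
apply: is_derive_eq; first exact: (is_derive_comp dsum (is_derive1_sqrt sum_gt0)).
rewrite -enorm_sq sqrtr_sqr ger0_norm ?enorm_ge0 //; field.
by rewrite gt_eqF.
Qed.

End EuclideanNorm.

Section Annulus.
Variables (R : realType) (n : nat).
Local Notation vec := 'rV[R]_n.+1.
Implicit Types (x y : vec) (th : vec).

Definition annulus : set vec := [set x | 0 < enorm x < 1].

Lemma annulus_neq0 x : annulus x -> x != 0.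
Proof. by rewrite -enorm_gt0 => /andP[]. Qed.

Lemma near_neq0 x : x != 0 -> \forall y \near x, y != 0.
Proof.
rewrite -enorm_gt0 => x_gt0; near=> y; rewrite -enorm_gt0; near: y.
exact: (cvgr_gt _ (@continuous_enorm R n x) _ x_gt0).
Unshelve. all: by end_near. Qed.

Lemma near_annulus x : annulus x -> \forall y \near x, annulus y.
Proof.
move=> /andP[x_gt0 x_lt1].
have norm_x := @continuous_enorm R n x.
near=> y; apply/andP; split; near: y.
  exact: (cvgr_gt _ norm_x _ x_gt0).
exact: (cvgr_lt _ norm_x _ x_lt1).
Unshelve. all: by end_near. Qed.

Lemma on_sphere_neq0 th : on_sphere th -> th != 0.
Proof. by rewrite /on_sphere -enorm_gt0 => ->. Qed.

Lemma enorm_ray th (r : R) : on_sphere th -> 0 < r -> enorm (r *: th) = r.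
Proof. by move=> th1 r_gt0; rewrite enormZ th1 mulr1 gtr0_norm. Qed.

Lemma near_ray_annulus th : on_sphere th -> \forall r \near (1 : R)^'-, annulus (r *: th).
Proof.
move=> th1; near=> r; rewrite /annulus /= enorm_ray //.
apply/andP; split; near: r; [exact: (nbhs_left_gt ltr01) | exact: nbhs_left_lt].
Unshelve. all: by end_near. Qed.

Lemma cvg_enorm_ray th : on_sphere th -> enorm (r *: th) @[r --> (1 : R)^'-] --> (1 : R).
Proof.
move=> th1; apply: (cvg_trans (near_eq_cvg _)); last exact/cvg_at_left_filter/cvg_id.
near=> r; rewrite /= enorm_ray //; near: r; exact: (nbhs_left_gt ltr01).
Unshelve. all: by end_near. Qed.

Lemma add1_enorm_neq0 x : 1 + enorm x != 0.
Proof. by rewrite lt0r_neq0 // ltr_wpDr ?enorm_ge0. Qed.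

Lemma rhoE x : rho x = 4 / (1 + enorm x) - 2.
Proof. by rewrite /rho; field; rewrite add1_enorm_neq0. Qed.

Lemma rho_gt0 x : annulus x -> 0 < rho x.
Proof.
by case/andP => x_gt0 x_lt1; rewrite /rho divr_gt0 ?mulr_gt0 ?subr_gt0 ?addr_gt0.
Qed.

Lemma cvg_rho_ray th : on_sphere th -> rho (r *: th) @[r --> (1 : R)^'-] --> (0 : R).
Proof.
move=> th1; rewrite (_ : (fun r => _) = (fun r => 4 / (1 + enorm (r *: th)) - 2)); last first.
  by apply/funext => r; rewrite rhoE.
have two0 : (1 + 1 : R) != 0 by rewrite lt0r_neq0.
have inv_cvg : (1 + enorm (r *: th))^-1 @[r --> (1 : R)^'-] --> (1 + 1 : R)^-1.
  exact: cvgV two0 (cvgD (cvg_cst _) (cvg_enorm_ray th1)).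
rewrite (_ : 0 = 4 * (1 + 1)^-1 - 2 :> R); last by field.
exact: cvgB (cvgM (cvg_cst _) inv_cvg) (cvg_cst _).
Qed.

Definition drho (i : 'I_n.+1) x : R := -4 * x ord0 i / enorm x / (1 + enorm x) ^+ 2.

Lemma is_derive_rho x (i : 'I_n.+1) : x != 0 -> is_derive x (ebasis R i) (@rho R n) (drho i x).
Proof.
move=> x0; have x_gt0 : 0 < enorm x by rewrite enorm_gt0.
have dp : is_derive x (ebasis R i) (fun y => 1 + enorm y) (0 + x ord0 i / enorm x).
  exact: is_deriveD (is_derive_cst _ _ _) (is_derive_enorm i x0).
have dinv := is_deriveV (F := fun y => 1 + enorm y) (add1_enorm_neq0 x) dp.
have dr : is_derive x (ebasis R i) (fun y => 4 * (1 + enorm y)^-1 - 2)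
    (4 *: (- (1 + enorm x) ^- 2 * (0 + x ord0 i / enorm x)) - 0).
  exact: is_deriveB (is_deriveZ 4 dinv) (is_derive_cst _ _ _).
rewrite (_ : @rho R n = fun y => 4 * (1 + enorm y)^-1 - 2); last first.
  by apply/funext => y; rewrite rhoE.
apply: (is_derive_eq dr); rewrite /drho subr0 add0r [_ *: _]/GRing.scale /=; field.
by rewrite add1_enorm_neq0 lt0r_neq0.
Qed.

Lemma cfac_rho x : annulus x -> cfac x * rho x = 4 / (1 + enorm x) ^+ 2.
Proof.
case/andP=> x_gt0 x_lt1; have m0 : 1 - enorm x != 0 by rewrite subr_eq0 eq_sym lt_eqF.
rewrite /cfac /rho (_ : 1 - enorm x ^+ 2 = (1 - enorm x) * (1 + enorm x)); last by ring.
by field; rewrite m0 add1_enorm_neq0.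
Qed.

Lemma sum_drho_sq x : annulus x -> \sum_i drho i x ^+ 2 = (cfac x * rho x) ^+ 2.
Proof.
move=> xA; have x_gt0 : 0 < enorm x by rewrite enorm_gt0 annulus_neq0.
rewrite cfac_rho // (eq_bigr (fun i => (4 / enorm x / (1 + enorm x) ^+ 2) ^+ 2 * x ord0 i ^+ 2)).
  by rewrite -mulr_sumr -enorm_sq; field; rewrite add1_enorm_neq0 lt0r_neq0.
by move=> i _; rewrite /drho; field; rewrite add1_enorm_neq0 lt0r_neq0.
Qed.

End Annulus.

Section RegularFunctions.
Variables (R : realType) (n : nat) (f : 'rV[R]_n.+1 -> R).
Hypothesis f_smooth : smooth_on (fun x => x <> 0) (radial f).
Local Notation vec := 'rV[R]_n.+1.
Local Notation F := (radial f).
Implicit Types (x y : vec) (th : vec) (E : vec -> R).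

Lemma radialZ (c : R) y : 0 < c -> F (c *: y) = F y.
Proof.
move=> c_gt0; rewrite /radial enormZ gtr0_norm // scalerA invfM mulrAC.
by rewrite mulVf ?gt_eqF // mul1r.
Qed.

Lemma radial_sphere th : on_sphere th -> F th = f th.
Proof. by rewrite /radial => ->; rewrite invr1 scale1r. Qed.

Lemma dpart_radialZ (s : seq 'I_n.+1) (c : R) y : y != 0 -> 0 < c ->
  dpart s F (c *: y) = (c ^+ size s)^-1 * dpart s F y.
Proof.
elim: s c y => [|i s IH] c y y0 c_gt0 /=; first by rewrite radialZ // expr0 invr1 mul1r.
have c0 : c != 0 by rewrite gt_eqF.
have near_cy : \forall z \near c *: y, (c ^+ size s)^-1 * dpart s F (c^-1 *: z) = dpart s F z.
  have cy0 : c *: y != 0 by rewrite scaler_eq0 negb_or c0.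
  near=> z.
  have zE : z = c *: (c^-1 *: z) by rewrite scalerA mulfV // scale1r.
  rewrite [in RHS]zE (IH c (c^-1 *: z)) // scaler_eq0 negb_or invr_eq0 c0 /=.
  by near: z; exact: (near_neq0 cy0).
have dy : is_derive (c^-1 *: (c *: y)) (ebasis R i) (dpart s F) (pd i (dpart s F) y).
  rewrite scalerA mulVf // scale1r; apply: derivableP.
  by apply: f_smooth => /eqP; rewrite (negbTE y0).
have := is_deriveM (is_derive_cst ((c ^+ size s)^-1) (c *: y) (ebasis R i)) (is_derive_compZ dy).
rewrite /pd -(near_eq_derive _ near_cy) => dH; rewrite (derive_val (is_derive := dH)).
by rewrite exprS invfM [_ *: 0]mulr0 addr0 /= [_ *: _]mulrA [_ * c^-1]mulrC.
Unshelve. all: by end_near. Qed.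

(* Smoothness up to the sphere is modelled by [regular]: agreement on the annulus with an
   expression in the coordinates, |x|, (c + |x|)^-1 and the partial derivatives of the radial
   extension of f.  All the argument needs is that this class is closed under d_i
   ([regular_pd]) and has a limit along every ray to the sphere ([regular_cvg_ray]). *)
Inductive regular_expr : (vec -> R) -> Prop :=
| RCst (c : R) : regular_expr (fun _ => c)
| RCoord (j : 'I_n.+1) : regular_expr (fun y => y ord0 j)
| RNorm : regular_expr (@enorm R n)
| RInvShift (c : R) : 0 <= c -> regular_expr (fun y => (c + enorm y)^-1)
| RPart (s : seq 'I_n.+1) : regular_expr (dpart s F)
| RAdd E1 E2 : regular_expr E1 -> regular_expr E2 -> regular_expr (fun y => E1 y + E2 y)
| RMul E1 E2 : regular_expr E1 -> regular_expr E2 -> regular_expr (fun y => E1 y * E2 y).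

Lemma regular_expr_is_derive E (i : 'I_n.+1) : regular_expr E ->
  exists2 E', regular_expr E' & forall x, annulus x -> is_derive x (ebasis R i) E (E' x).
Proof.
have dnorm x : annulus x -> is_derive x (ebasis R i) (@enorm R n) (x ord0 i * (0 + enorm x)^-1).
  by move=> /annulus_neq0 x0; rewrite add0r; exact: is_derive_enorm.
elim=> [c|j||c c_ge0|s|E1 E2 _ [E1' re1 d1] _ [E2' re2 d2]
        |E1 E2 re1 [E1' re1' d1] re2 [E2' re2' d2]].
- by exists (fun _ => 0) => [|x _]; [exact: RCst | exact: is_derive_cst].
- by exists (fun _ => ebasis R i ord0 j) => [|x _]; [exact: RCst | exact: is_derive_coord].
- exists (fun y => y ord0 i * (0 + enorm y)^-1) => //.
  exact: RMul (RCoord i) (RInvShift (lexx 0)).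
- exists (fun y => (-1) * ((c + enorm y)^-1 * (c + enorm y)^-1) * (y ord0 i * (0 + enorm y)^-1)).
    by do 2 apply: RMul; try apply: RMul; exact: RCst || exact: RCoord || exact: RInvShift.
  move=> x xA; have cx_gt0 : 0 < c + enorm x by rewrite ltr_wpDl // (andP xA).1.
  have dcx : is_derive x (ebasis R i) (fun y => c + enorm y) (0 + x ord0 i / (0 + enorm x)).
    exact: is_deriveD (is_derive_cst c x (ebasis R i)) (dnorm x xA).
  apply: is_derive_eq; first exact: (is_deriveV (F := fun y => c + enorm y) (lt0r_neq0 cx_gt0) dcx).
  by rewrite !add0r mulN1r -invfM -expr2.
- exists (dpart (i :: s) F) => [|x /annulus_neq0 /eqP x0]; first exact: RPart.
  exact/derivableP/f_smooth.
- exists (fun y => E1' y + E2' y) => [|x xA]; first exact: RAdd.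
  exact: is_deriveD (d1 x xA) (d2 x xA).
- exists (fun y => E1 y * E2' y + E2 y * E1' y) => [|x xA].
    by apply: RAdd; apply: RMul.
  exact: is_deriveM (d1 x xA) (d2 x xA).
Qed.

Lemma regular_expr_cvg_ray E th : regular_expr E -> on_sphere th ->
  exists l : R, E (r *: th) @[r --> (1 : R)^'-] --> l.
Proof.
move=> + th1; elim=> [c|j||c c_ge0|s|E1 E2 _ [l1 cv1] _ [l2 cv2]|E1 E2 _ [l1 cv1] _ [l2 cv2]].
- by exists c; exact: cvg_cst.
- exists (1 * th ord0 j); under eq_cvg do rewrite mxE.
  exact/cvg_at_left_filter/(cvgM cvg_id (cvg_cst _)).
- by exists 1; exact: cvg_enorm_ray.
- exists (c + 1)^-1; apply: cvgV; first by rewrite lt0r_neq0 // ltr_wpDl.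
  exact: cvgD (cvg_cst _) (cvg_enorm_ray th1).
- exists (dpart s F th); apply: (cvg_trans (near_eq_cvg _)).
    near=> r; rewrite /= dpart_radialZ ?on_sphere_neq0 //; near: r; exact: (nbhs_left_gt ltr01).
  rewrite -{2}[dpart s F th]mul1r; apply: cvgM; last exact: cvg_cst.
  have : r ^+ size s @[r --> (1 : R)] --> (1 : R) ^+ size s by exact: exprn_continuous.
  by rewrite expr1n => /cvg_at_left_filter /(cvgV (oner_neq0 R)); rewrite invr1.
- by exists (l1 + l2); exact: cvgD.
- by exists (l1 * l2); exact: cvgM.
Unshelve. all: by end_near. Qed.

Definition regular E := exists2 E0, regular_expr E0 & forall x, annulus x -> E x = E0 x.

Lemma regular_expr_regular E : regular_expr E -> regular E.
Proof. by exists E. Qed.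

Lemma regular_ext E1 E2 : (forall x, annulus x -> E1 x = E2 x) -> regular E1 -> regular E2.
Proof. by move=> eE [E0 re eE1]; exists E0 => // x xA; rewrite -eE // eE1. Qed.

Lemma regular_cst (c : R) : regular (fun _ => c).
Proof. exact/regular_expr_regular/RCst. Qed.

Lemma regular_radial : regular F.
Proof. exact/regular_expr_regular/(RPart [::]). Qed.

Lemma regularD E1 E2 : regular E1 -> regular E2 -> regular (fun y => E1 y + E2 y).
Proof.
move=> [E01 re1 e1] [E02 re2 e2]; exists (fun y => E01 y + E02 y); first exact: RAdd.
by move=> x xA; rewrite e1 ?e2.
Qed.

Lemma regularM E1 E2 : regular E1 -> regular E2 -> regular (fun y => E1 y * E2 y).
Proof.
move=> [E01 re1 e1] [E02 re2 e2]; exists (fun y => E01 y * E02 y); first exact: RMul.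
by move=> x xA; rewrite e1 ?e2.
Qed.

Lemma regularX E (m : nat) : regular E -> regular (fun y => E y ^+ m).
Proof.
move=> rE; elim: m => [|m IH]; first by apply: regular_ext (regular_cst 1) => x _; rewrite expr0.
by apply: regular_ext (regularM rE IH) => x _; rewrite exprS.
Qed.

Lemma regular_sum (G : 'I_n.+1 -> vec -> R) :
  (forall i, regular (G i)) -> regular (fun y => \sum_i G i y).
Proof.
move=> rG; elim: (index_enum _) => [|i r IH].
  by apply: regular_ext (regular_cst 0) => x _; rewrite big_nil.
by apply: regular_ext (regularD (rG i) IH) => x _; rewrite big_cons.
Qed.

Lemma regular_is_derive_expr E (i : 'I_n.+1) : regular E ->
  exists2 E', regular_expr E' & forall x, annulus x -> is_derive x (ebasis R i) E (E' x).
Proof.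
move=> [E0 re eE]; have [E' re' dE0] := regular_expr_is_derive i re.
exists E' => // x xA; apply: near_eq_is_derive (dE0 x xA).
by near=> y; rewrite eE //; near: y; exact: near_annulus.
Unshelve. all: by end_near. Qed.

Lemma regular_is_derive E (i : 'I_n.+1) x : regular E -> annulus x ->
  is_derive x (ebasis R i) E (pd i E x).
Proof.
by move=> /(regular_is_derive_expr i)[E' _ dE] /dE [dEx _]; exact: derivableP.
Qed.

Lemma regular_pd E (i : 'I_n.+1) : regular E -> regular (pd i E).
Proof.
move=> /(regular_is_derive_expr i)[E' re dE]; exists E' => // x /dE dEx.
exact: derive_val.
Qed.

Lemma regular_cvg_ray E th : regular E -> on_sphere th ->
  exists l : R, E (r *: th) @[r --> (1 : R)^'-] --> l.
Proof.
move=> [E0 re eE] th1; have [l cvE0] := regular_expr_cvg_ray re th1.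
exists l; apply: cvg_trans cvE0; apply: near_eq_cvg.
by near=> r; rewrite /= eE //; near: r; exact: near_ray_annulus.
Unshelve. all: by end_near. Qed.

Lemma regular_rho : regular (@rho R n).
Proof.
apply: regular_ext (regularD (regularM (regular_cst 4) (regular_expr_regular (RInvShift ler01)))
  (regular_cst (-2))) => x _.
by rewrite rhoE.
Qed.

Lemma regular_drho (i : 'I_n.+1) : regular (drho i).
Proof.
have r_inv := regular_expr_regular (RInvShift (lexx 0)).
have p_inv := regular_expr_regular (RInvShift ler01).
apply: regular_ext (regularM (regularM (regularM (regular_cst (-4))
  (regular_expr_regular (RCoord i))) r_inv) (regularX 2 p_inv)) => x _.
by rewrite /drho add0r exprVn.
Qed.

Lemma regular_cfac_rho : regular (fun y => cfac y * rho y).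
Proof.
apply: regular_ext (regularM (regular_cst 4) (regularX 2 (regular_expr_regular (RInvShift ler01)))).
by move=> x xA; rewrite cfac_rho // exprVn.
Qed.

Lemma regular_cfac_rhoV : regular (fun y => (cfac y * rho y)^-1).
Proof.
apply: regular_ext (regularM (regular_cst (4^-1)) (regularX 2 (regularD (regular_cst 1)
  (regular_expr_regular RNorm)))) => x xA.
by rewrite cfac_rho // invfM invrK.
Qed.

Lemma pd_rho_powM (c : R) (U Z : vec -> R) (i : 'I_n.+1) x :
  regular Z -> (forall y, annulus y -> U y = rho y `^ c * Z y) -> annulus x ->
  pd i U x = rho x `^ (c - 1) * (c * drho i x * Z x + rho x * pd i Z x).
Proof.
move=> rZ eU xA; have rx_gt0 := rho_gt0 xA.
have eU_near : \near x, U x = rho x `^ c * Z x.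
  by near=> y; rewrite eU //; near: y; exact: near_annulus.
have dpow := is_derive_comp (is_derive_rho i (annulus_neq0 xA)) (is_derive1_powR c rx_gt0).
have dU := is_deriveM dpow (regular_is_derive i rZ xA).
rewrite /pd (near_eq_derive _ eU_near) (derive_val (is_derive := dU)) /= /GRing.scale /=.
by rewrite -{1}(subrK 1 c) (powR_addn _ 1) // expr1 /pd; ring.
Unshelve. all: by end_near. Qed.

Hypothesis n_gt0 : (0 < n)%N.

Lemma LB_rho_pow (b : R) (U E : vec -> R) :
  regular E -> (forall y, annulus y -> U y = rho y `^ b * E y) ->
  exists2 E2, regular E2 &
    forall x, annulus x -> LB U x = rho x `^ b * (b * (b - n%:R) * E x + rho x * E2 x).
Proof.
move=> rE eU; set m := n.-1; have nE : n = m.+1 by rewrite prednK.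
have nR : n%:R = m%:R + 1 :> R by rewrite nE -natr1.
pose w y := cfac y * rho y.
pose W i y := w y ^+ m * (b * drho i y * E y + rho y * pd i E y).
have rW i : regular (W i).
  apply: regularM (regularX _ regular_cfac_rho) (regularD _ _).
    exact: regularM (regularM (regular_cst b) (regular_drho i)) rE.
  exact: regularM regular_rho (regular_pd i rE).
have flux i y : annulus y -> cfac y ^+ m * pd i U y = rho y `^ (b - n%:R) * W i y.
  move=> yA; rewrite (pd_rho_powM i rE eU yA) /W /w [(_ * _) ^+ m]exprMn.
  rewrite (_ : b - 1 = b - n%:R + m%:R); last by rewrite nR; ring.
  by rewrite powR_addn ?rho_gt0 //; ring.
exists (fun y => (b - n%:R) * (w y)^-1 ^+ 2 * \sum_i drho i y * pd i E y
                 + (w y)^-1 ^+ n.+1 * \sum_i pd i (W i) y).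
  apply: regularD; apply: regularM.
  - exact: regularM (regular_cst _) (regularX _ regular_cfac_rhoV).
  - by apply: regular_sum => i; exact: regularM (regular_drho i) (regular_pd i rE).
  - exact: regularX regular_cfac_rhoV.
  - by apply: regular_sum => i; exact: regular_pd.
move=> x xA; rewrite /LB (eq_bigr _ (fun i _ => pd_rho_powM i (rW i) (flux i) xA)) -mulr_sumr.
rewrite (eq_bigr (fun i => (b - n%:R) * b * w x ^+ m * E x * drho i x ^+ 2 + rho x *
    ((b - n%:R) * w x ^+ m * (drho i x * pd i E x) + pd i (W i) x))); last first.
  by move=> i _; rewrite /W; ring.
rewrite big_split /= -mulr_sumr sum_drho_sq // -[cfac x * rho x]/(w x).
rewrite -mulr_sumr big_split /= -mulr_sumr.
have rx0 : rho x != 0 by rewrite lt0r_neq0 ?rho_gt0.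
have wx0 : w x != 0 by rewrite /w cfac_rho // mulf_neq0 // invr_eq0 expf_neq0 // add1_enorm_neq0.
have powE (a : R) : a ^+ n.+1 = a ^+ m * a ^+ 2 by rewrite -exprD addn2 nE.
have -> : rho x `^ b = rho x `^ (b - n%:R - 1) * rho x ^+ n.+1.
  by rewrite -powR_addn ?rho_gt0 //; congr (_ `^ _); rewrite -natr1; ring.
have -> : cfac x = w x / rho x by rewrite /w mulfK.
move: wx0 rx0; set a := w x; set r := rho x; clearbody a r => a0 r0.
by rewrite !powE !exprMn !exprVn; field; rewrite a0 r0 !expf_neq0.
Qed.

Lemma Dop_rho_pow (b t : R) (U E : vec -> R) :
  regular E -> (forall y, annulus y -> U y = rho y `^ b * E y) ->
  exists2 E2, regular E2 &
    forall x, annulus x -> Dop t U x = rho x `^ b * (indicial n b t * E x + rho x * E2 x).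
Proof.
move=> rE eU; have [E2 rE2 eLB] := LB_rho_pow rE eU.
exists (fun y => - E2 y) => [|x xA].
  by apply: regular_ext (regularM (regular_cst (-1)) rE2) => x _; rewrite mulN1r.
by rewrite /Dop eLB // eU // /indicial; ring.
Qed.

Lemma Dprod_rho_pow (a : R) (ts : seq R) (U L E : vec -> R) :
  regular L -> regular E -> (forall y, annulus y -> U y = rho y `^ a * (L y + rho y * E y)) ->
  exists2 E', regular E' & forall x, annulus x ->
    Dprod ts U x = rho x `^ a * (\prod_(t <- ts) indicial n a t * L x + rho x * E' x).
Proof.
move=> rL rE eU; elim: ts => [|t ts [E1 rE1 eD]].
  by exists E => // x xA; rewrite big_nil mul1r /= eU.
have rP : regular (fun y => \prod_(t <- ts) indicial n a t * L y + rho y * E1 y).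
  exact: regularD (regularM (regular_cst _) rL) (regularM regular_rho rE1).
have [E2 rE2 eDop] := Dop_rho_pow t rP eD.
exists (fun y => indicial n a t * E1 y + E2 y) => [|x xA].
  exact: regularD (regularM (regular_cst _) rE1) rE2.
by rewrite /= eDop // big_cons; ring.
Qed.

Lemma bdry_annulus (W L E : vec -> R) th : on_sphere th -> regular E ->
  (forall r : R, 0 < r -> L (r *: th) = L th) ->
  (forall x, annulus x -> W x = L x + rho x * E x) -> bdry W th (L th).
Proof.
move=> th1 rE L_ray eW; have [l cvE] := regular_cvg_ray rE th1.
have cvW : L th + rho (r *: th) * E (r *: th) @[r --> (1 : R)^'-] --> L th.
  by rewrite -[X in _ --> X]addr0 -(mul0r l); exact: cvgD (cvg_cst _) (cvgM (cvg_rho_ray th1) cvE).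
rewrite /bdry; apply: cvg_trans cvW; apply: near_eq_cvg; near=> r.
have r_gt0 : 0 < r by near: r; exact: (nbhs_left_gt ltr01).
by rewrite /= eW ?L_ray //; near: r; exact: near_ray_annulus.
Unshelve. all: by end_near. Qed.

Definition rho_Dprod (e s : R) (ts : seq R) (U : vec -> R) : vec -> R :=
  fun x => rho x `^ e * Dprod ts (fun y => rho y `^ s * U y) x.

Lemma bdry_rho_Dprod (e s p : R) (ts : seq R) (U L E : vec -> R) th :
  e + (s + p) = 0 -> on_sphere th -> regular L -> regular E ->
  (forall r : R, 0 < r -> L (r *: th) = L th) ->
  (forall x, annulus x -> U x = rho x `^ p * (L x + rho x * E x)) ->
  bdry (rho_Dprod e s ts U) th (\prod_(t <- ts) indicial n (s + p) t * L th).
Proof.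
move=> esp th1 rL rE L_ray eU.
have eV x : annulus x -> rho x `^ s * U x = rho x `^ (s + p) * (L x + rho x * E x).
  by move=> xA; rewrite eU // mulrA -powRD // lt0r_neq0 ?rho_gt0 ?implybT.
have [E' rE' eD] := Dprod_rho_pow ts rL rE eV.
apply: (bdry_annulus (L := fun y => \prod_(t <- ts) indicial n (s + p) t * L y) th1 rE').
  by move=> r r_gt0; rewrite L_ray.
move=> x xA.
rewrite /rho_Dprod eD // mulrA -powRD ?esp ?powRr0 ?mul1r; first ring.
by rewrite lt0r_neq0 ?rho_gt0 ?implybT.
Qed.

(* [Beven g j] for j > 0 and, once its two signs cancel, [Bodd g j] are instances of this. *)
Definition normalized_rho_Dprod (e s p : R) (ts : seq R) (U : vec -> R) : vec -> R :=
  fun x => (lim ((fun r : R => rho_Dprod e s ts (fun y => rho y `^ p) (r *: th0 R n))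
                   @ (1 : R)^'-))^-1 * rho_Dprod e s ts U x.

Lemma bdry_normalized_rho_Dprod (e s p : R) (ts : seq R) (U L E : vec -> R) th :
  e + (s + p) = 0 -> \prod_(t <- ts) indicial n (s + p) t != 0 ->
  on_sphere th -> regular L -> regular E ->
  (forall r : R, 0 < r -> L (r *: th) = L th) ->
  (forall x, annulus x -> U x = rho x `^ p * (L x + rho x * E x)) ->
  bdry (normalized_rho_Dprod e s p ts U) th (L th).
Proof.
move=> esp P0 th1 rL rE L_ray eU.
have th0_1 : on_sphere (th0 R n) by rewrite /on_sphere enorm_ebasis.
have : bdry (rho_Dprod e s ts (fun y => rho y `^ p)) (th0 R n)
              (\prod_(t <- ts) indicial n (s + p) t * 1).
  apply: (bdry_rho_Dprod esp th0_1 (regular_cst 1) (regular_cst 0)) => // x _.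
  by rewrite mulr0 addr0 mulr1.
rewrite /normalized_rho_Dprod mulr1 => /(cvg_lim (@Rhausdorff R)) ->.
rewrite -[L th](mulKf P0); exact: cvgM (cvg_cst _) (bdry_rho_Dprod esp th1 rL rE L_ray eU).
Qed.

Lemma rho_pow_radial_split (p : R) (m : nat) x : (0 < m)%N -> annulus x ->
  rho x `^ (p + 2 * m%:R) * F x = rho x `^ p * (0 + rho x * (rho x ^+ (2 * m).-1 * F x)).
Proof.
move=> m_gt0 xA; have m2_gt0 : (0 < 2 * m)%N by rewrite muln_gt0.
by rewrite -natrM powR_addn ?rho_gt0 // -{1}(prednK m2_gt0) exprS; ring.
Qed.

Lemma regular_rho_pow_radial (k : nat) : regular (fun y => rho y ^+ k * F y).
Proof. exact: regularM (regularX _ regular_rho) regular_radial. Qed.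

Lemma bdry_normalized_rho_Dprod_radial (e s p : R) (ts : seq R) (m : nat) th :
  e + (s + p) = 0 -> \prod_(t <- ts) indicial n (s + p) t != 0 -> on_sphere th -> (0 < m)%N ->
  bdry (normalized_rho_Dprod e s p ts (fun x => rho x `^ p * F x)) th (f th) /\
  bdry (normalized_rho_Dprod e s p ts (fun x => rho x `^ (p + 2 * m%:R) * F x)) th 0.
Proof.
move=> esp P0 th1 m_gt0; split.
  rewrite -(radial_sphere th1).
  apply: (bdry_normalized_rho_Dprod esp P0 th1 regular_radial (regular_cst 0)).
    by move=> r; exact: radialZ.
  by move=> x _; rewrite mulr0 addr0.
apply: (bdry_normalized_rho_Dprod (L := fun _ => 0) esp P0 th1 (regular_cst 0)
  (regular_rho_pow_radial _)).
  by [].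
by move=> x xA; exact: rho_pow_radial_split.
Qed.

Lemma bdry_rho_pow_radial (m : nat) th : on_sphere th -> (0 < m)%N ->
  bdry (fun x => rho x `^ 0 * F x) th (f th) /\
  bdry (fun x => rho x `^ (0 + 2 * m%:R) * F x) th 0.
Proof.
move=> th1 m_gt0; split.
  rewrite -(radial_sphere th1); apply: (bdry_annulus th1 (regular_cst 0)) => [r|x _].
    exact: radialZ.
  by rewrite powRr0 mul1r mulr0 addr0.
apply: (bdry_annulus (L := fun _ => 0) th1 (regular_rho_pow_radial _)) => // x xA.
by rewrite rho_pow_radial_split // powRr0 mul1r.
Qed.

End RegularFunctions.

Theorem lemma4p5 (R : realType) (n : nat) (g : R) (f : 'rV[R]_(n.+1) -> R) (m : nat) :
  (1 <= n)%N -> 0 < g -> (forall k : nat, g <> k%:R) ->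
  smooth_on (fun x : 'rV[R]_(n.+1) => x <> 0) (radial f) ->
  (0 < m)%N ->
  (forall j : nat, (j <= flo (g / 2))%N ->
     forall th : 'rV[R]_(n.+1), on_sphere th ->
       bdry (Beven g j (fun x => rho x `^ (2 * j%:R) * radial f x)) th (f th) /\
       bdry (Beven g j (fun x => rho x `^ (2 * j%:R + 2 * m%:R) * radial f x)) th 0) /\
  (forall j : nat, (j.+1 + flo (g / 2) <= flo g)%N ->
     forall th : 'rV[R]_(n.+1), on_sphere th ->
       bdry (Bodd g j (fun x => rho x `^ (2 * j%:R + 2 * fracp g) * radial f x)) th (f th) /\
       bdry (Bodd g j (fun x => rho x `^ (2 * j%:R + 2 * fracp g + 2 * m%:R) * radial f x)) th 0).
Proof.
move=> n_gt0 g_gt0 g_nonint f_smooth m_gt0; split=> j j_range th th1.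
- have [->|j0] := eqVneq j 0%N.
    by rewrite /Beven eqxx mulr0n mulr0; exact: bdry_rho_pow_radial.
  rewrite /Beven (negbTE j0) /b_even.
  have P0 := indicial_even_neq0 n g_gt0 g_nonint j_range.
  by apply: (bdry_normalized_rho_Dprod_radial f_smooth n_gt0 _ P0 th1 m_gt0); ring.
rewrite /Bodd /b_odd invrN opprK.
have P0 := indicial_odd_neq0 n g_gt0 g_nonint j_range.
by apply: (bdry_normalized_rho_Dprod_radial f_smooth n_gt0 _ P0 th1 m_gt0); ring.
Qed.
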